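(* Let $(\mathbf{C},\mathcal{M})$ be a finitary $\mathcal{M}$-adhesive category with $\mathcal{M}$-effective unions, an $\mathcal{M}$-initial object $\varnothing$, an epi-$\mathcal{M}$-factorisation, existence of final pullback complements (FPCs) for all pairs of composable $\mathcal{M}$-morphisms, and stability of $\mathcal{M}$-morphisms under FPCs. Let $\mathcal{N}$ be a set of objects and $\mathsf{c}_{\mathcal{N}}$, $\mathcal{S}_{\mathcal{N}}$ as in the context. Let $r=(O\hookleftarrow K\hookrightarrow I)$ be a linear rule (a span of $\mathcal{M}$-morphisms) with $O,K,I\vDash\mathsf{c}_{\mathcal{N}}$. Define the condition $\mathsf{c}_I$ over $I$ as follows. For each $(C_2\hookleftarrow D\hookrightarrow C_1)\in\mathcal{S}_{\mathcal{N}}$ and each pullback embedding of $(C_2\hookleftarrow D)$ into $(O\hookleftarrow K)$, i.e. each pair of $\mathcal{M}$-morphisms $(C_2\hookrightarrow O)$, $(D\hookrightarrow K)$ such that the square $D\to C_2\to O$, $D\to K\to O$ commutes and is a pullback, form the pushout $(C_1\hookrightarrow P\hookleftarrow I)$ of the span $(C_1\hookleftarrow D\hookrightarrow K\hookrightarrow I)$; if $P\vDash\mathsf{c}_{\mathcal{N}}$, this pullback embedding contributes the condition $\neg\exists(I\hookrightarrow P)$. Let $\mathsf{c}_I$ be the conjunction of all such contributions. Then $\mathsf{c}_I$ is the (minimal) constraint-preserving application condition for $r$: for every object $X_0$ with $X_0\vDash\mathsf{c}_{\mathcal{N}}$ and every $\mathcal{M}$-morphism $m:I\hookrightarrow X_0$,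 the object $X_1$ obtained by the SqPO direct derivation of $X_0$ along $r$ at $m$ satisfies $X_1\vDash\mathsf{c}_{\mathcal{N}}$ if and only if $m\vDash\mathsf{c}_I$.
   Context: $\mathcal{M}$ is a class of monomorphisms. $\mathsf{c}_{\mathcal{N}}:=\bigwedge_{N\in\mathcal{N}}\neg\exists(\varnothing\hookrightarrow N)$; an object $X$ satisfies it iff no $N\in\mathcal{N}$ admits an $\mathcal{M}$-morphism $N\hookrightarrow X$. $\mathcal{S}_{\mathcal{N}}$ is the set of spans $(C_1\hookleftarrow D\hookrightarrow C_2)$ of $\mathcal{M}$-morphisms with $C_1,D,C_2\vDash\mathsf{c}_{\mathcal{N}}$ whose pushout is isomorphic to some $N\in\mathcal{N}$. For an $\mathcal{M}$-morphism $m:I\hookrightarrow X$ and $f:I\hookrightarrow P$ in $\mathcal{M}$, $m\vDash\exists(f)$ iff there is an $\mathcal{M}$-morphism $g:P\hookrightarrow X$ with $m=g\circ f$; $m\vDash\neg\mathsf{c}$ iff not $m\vDash\mathsf{c}$, and conjunction is interpreted componentwise. SqPO direct derivation (rules read right to left, from input $I$ to output $O$): given $m:I\hookrightarrow X_0$, form the final pullback complement $K\to\overline{X}_0\hookrightarrow X_0$ of $K\hookrightarrow I\hookrightarrow X_0$ (a pullback square $K\to\overline{X}_0\to X_0$, $K\to I\to X_0$ that is final among all pullback squares over $K\to I\to X_0$ in the sense of the universal property of FPCs), then $X_1$ is the pushout of $O\hookleftarrow K\to\overline{X}_0$. *)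

From Stdlib Require Import List.
Set Implicit Arguments.

(** * Categories (morphism equality is Leibniz equality) *)
Record Cat := {
  Ob :> Type;
  Hom : Ob -> Ob -> Type;
  idm : forall A, Hom A A;
  comp : forall A B C, Hom B C -> Hom A B -> Hom A C;
  comp_idl : forall A B (f : Hom A B), comp (idm B) f = f;
  comp_idr : forall A B (f : Hom A B), comp f (idm A) = f;
  comp_assoc : forall A B C D (f : Hom A B) (g : Hom B C) (h : Hom C D),
      comp h (comp g f) = comp (comp h g) f
}.
Arguments Hom {c} _ _.
Arguments idm {c} _.
Arguments comp {c A B C} _ _.
Notation "g \o f" := (comp g f) (at level 40, left associativity).

Section Cats.
Variable C : Cat.

Definition is_iso {A B : C} (f : Hom A B) : Prop :=
  exists g : Hom B A, g \o f = idm A /\ f \o g = idm B.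

Definition is_mono {A B : C} (f : Hom A B) : Prop :=
  forall Z (x y : Hom Z A), f \o x = f \o y -> x = y.

Definition is_epi {A B : C} (f : Hom A B) : Prop :=
  forall Z (x y : Hom B Z), x \o f = y \o f -> x = y.

Definition is_pullback {P B C' D : C} (p1 : Hom P B) (p2 : Hom P C')
    (f : Hom B D) (g : Hom C' D) : Prop :=
  f \o p1 = g \o p2 /\
  forall Z (z1 : Hom Z B) (z2 : Hom Z C'), f \o z1 = g \o z2 ->
    exists u : Hom Z P, (p1 \o u = z1 /\ p2 \o u = z2) /\
      forall v : Hom Z P, p1 \o v = z1 -> p2 \o v = z2 -> v = u.

Definition is_pushout {A B C' P : C} (f : Hom A B) (g : Hom A C')
    (i1 : Hom B P) (i2 : Hom C' P) : Prop :=
  i1 \o f = i2 \o g /\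
  forall Z (z1 : Hom B Z) (z2 : Hom C' Z), z1 \o f = z2 \o g ->
    exists u : Hom P Z, (u \o i1 = z1 /\ u \o i2 = z2) /\
      forall v : Hom P Z, v \o i1 = z1 -> v \o i2 = z2 -> v = u.

Definition MClass := forall A B : C, Hom A B -> Prop.

Variable M : MClass.
Arguments M {A B} _.

Definition is_FPC {A B C0 D : C} (a : Hom A B) (b : Hom B C0)
    (d : Hom A D) (c : Hom D C0) : Prop :=
  is_pullback a d b c /\
  forall A' D' (a' : Hom A' B) (d' : Hom A' D') (c' : Hom D' C0) (f : Hom A' A),
    is_pullback a' d' b c' -> a \o f = a' ->
    exists g : Hom D' D, (c \o g = c' /\ g \o d' = d \o f) /\
      forall h : Hom D' D, c \o h = c' -> h \o d' = d \o f -> h = g.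

Definition M_adhesive : Prop :=
  (forall A B (f : Hom A B), M f -> is_mono f) /\
  (forall A B (f : Hom A B), is_iso f -> M f) /\
  (forall A B D (f : Hom A B) (g : Hom B D), M f -> M g -> M (g \o f)) /\
  (forall A B D (f : Hom A B) (g : Hom B D), M (g \o f) -> M g -> M f) /\
  (forall B C' D (f : Hom B D) (g : Hom C' D), M g ->
      exists P (p1 : Hom P B) (p2 : Hom P C'), is_pullback p1 p2 f g) /\
  (forall P B C' D (p1 : Hom P B) (p2 : Hom P C') (f : Hom B D) (g : Hom C' D),
      is_pullback p1 p2 f g -> M g -> M p1) /\
  (forall A B C' (m : Hom A B) (f : Hom A C'), M m ->
      exists P (i1 : Hom B P) (i2 : Hom C' P), is_pushout m f i1 i2) /\
  (forall A B C' P (m : Hom A B) (f : Hom A C') (i1 : Hom B P) (i2 : Hom C' P),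
      is_pushout m f i1 i2 -> M m -> M i2) /\
  (forall A B C' D A' B' C'' D'
          (m : Hom A B) (f : Hom A C') (g : Hom B D) (n : Hom C' D)
          (m' : Hom A' B') (f' : Hom A' C'') (g' : Hom B' D') (n' : Hom C'' D')
          (a : Hom A' A) (b : Hom B' B) (c : Hom C'' C') (d : Hom D' D),
      is_pushout m f g n -> M m ->
      g' \o m' = n' \o f' ->
      m \o a = b \o m' -> f \o a = c \o f' ->
      g \o b = d \o g' -> n \o c = d \o n' ->
      is_pullback a m' m b -> is_pullback a f' f c ->
      M b -> M c -> M d ->
      (is_pushout m' f' g' n' <->
         (is_pullback b g' g d /\ is_pullback c n' n d))).

Definition finitary : Prop :=
  forall X : C, exists l : list {A : C & Hom A X},
    Forall (fun p : {A : C & Hom A X} => M (projT2 p)) l /\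
    forall A (m : Hom A X), M m ->
      exists p : {A0 : C & Hom A0 X}, In p l /\
        exists i : Hom A (projT1 p), is_iso i /\ projT2 p \o i = m.

Definition M_effective_unions : Prop :=
  forall A B C' D (b : Hom B D) (c : Hom C' D) (a1 : Hom A B) (a2 : Hom A C'),
    M b -> M c -> is_pullback a1 a2 b c ->
    forall E (e1 : Hom B E) (e2 : Hom C' E), is_pushout a1 a2 e1 e2 ->
    forall u : Hom E D, u \o e1 = b -> u \o e2 = c -> M u.

Definition M_initial (I0 : C) : Prop :=
  forall X : C, exists f : Hom I0 X, M f /\ forall g : Hom I0 X, g = f.

Definition epi_M_factorisation : Prop :=
  (forall A B (f : Hom A B),
      exists E (e : Hom A E) (m : Hom E B), is_epi e /\ M m /\ m \o e = f) /\
  (forall A B (f : Hom A B) E (e : Hom A E) (m : Hom E B)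
          E' (e' : Hom A E') (m' : Hom E' B),
      is_epi e -> M m -> m \o e = f ->
      is_epi e' -> M m' -> m' \o e' = f ->
      exists i : Hom E E', is_iso i /\ i \o e = e' /\ m' \o i = m).

Definition FPCs_exist : Prop :=
  forall A B C0 (a : Hom A B) (b : Hom B C0), M a -> M b ->
    exists D (d : Hom A D) (c : Hom D C0), is_FPC a b d c.

Definition M_stable_FPC : Prop :=
  forall A B C0 D (a : Hom A B) (b : Hom B C0) (d : Hom A D) (c : Hom D C0),
    is_FPC a b d c -> M a -> M b -> M c.

Variable NN : C -> Prop.

Definition sat_cN (X : C) : Prop :=
  forall N, NN N -> ~ exists f : Hom N X, M f.

Definition in_SN {D C1 C2 : C} (c1 : Hom D C1) (c2 : Hom D C2) : Prop :=
  M c1 /\ M c2 /\ sat_cN C1 /\ sat_cN D /\ sat_cN C2 /\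
  exists P (i1 : Hom C1 P) (i2 : Hom C2 P), is_pushout c1 c2 i1 i2 /\
    exists N, NN N /\ exists j : Hom P N, is_iso j.

Definition sat_cI {O K I X : C} (rO : Hom K O) (rI : Hom K I) (m : Hom I X)
    : Prop :=
  forall C1 C2 D (d1 : Hom D C1) (d2 : Hom D C2),
    in_SN d2 d1 ->
    forall (e2 : Hom C2 O) (eD : Hom D K), M e2 -> M eD ->
      is_pullback eD d2 rO e2 ->
    forall P (p1 : Hom C1 P) (pI : Hom I P), is_pushout d1 (rI \o eD) p1 pI ->
      sat_cN P ->
      ~ exists g : Hom P X, M g /\ g \o pI = m.

End Cats.
Arguments is_iso {C A B} _.
Arguments is_pullback {C P B C' D} _ _ _ _.
Arguments is_pushout {C A B C' P} _ _ _ _.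
Arguments is_FPC {C A B C0 D} _ _ _ _.
Arguments in_SN {C} M NN {D C1 C2} _ _.
Arguments sat_cI {C} M NN {O K I X} _ _ _.

(* An M-embedding N >-> X1 pulls back along the pushout square O -> X1 <- Xb to a span
   C2 <- D -> C1 of M-subobjects of O, K and Xb whose pushout is again N (van Kampen);
   pushing D -> C1 out along D -> K -> I gives an object P which embeds into X0 over m
   by M-effective unions, so m violates c_I.  Conversely, an embedding P >-> X0 over m
   restricts, by finality of the FPC, to an embedding C1 >-> Xb, and M-effective unions
   embed the pushout of C2 <- D -> C1, i.e. a forbidden pattern, into X1. *)
Set Implicit Arguments.

Section Pullbacks.
Variable C : Cat.

Lemma pullback_sym {P B C' D : C} (p1 : Hom P B) (p2 : Hom P C')
    (f : Hom B D) (g : Hom C' D) :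
  is_pullback p1 p2 f g -> is_pullback p2 p1 g f.
Proof.
  intros [Hc Hu]. split; [symmetry; exact Hc|].
  intros Z z1 z2 E. destruct (Hu Z z2 z1 (eq_sym E)) as [u [[E1 E2] Hv]].
  exists u. split; [split; assumption|]. intros v V1 V2. apply Hv; assumption.
Qed.

Lemma pushout_sym {A B C' P : C} (f : Hom A B) (g : Hom A C')
    (i1 : Hom B P) (i2 : Hom C' P) :
  is_pushout f g i1 i2 -> is_pushout g f i2 i1.
Proof.
  intros [Hc Hu]. split; [symmetry; exact Hc|].
  intros Z z1 z2 E. destruct (Hu Z z2 z1 (eq_sym E)) as [u [[E1 E2] Hv]].
  exists u. split; [split; assumption|]. intros v V1 V2. apply Hv; assumption.
Qed.

Lemma pullback_jointly_monic {P B C' D : C} (p1 : Hom P B) (p2 : Hom P C')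
    (f : Hom B D) (g : Hom C' D) :
  is_pullback p1 p2 f g ->
  forall Z (x y : Hom Z P), p1 \o x = p1 \o y -> p2 \o x = p2 \o y -> x = y.
Proof.
  intros [Hc Hu] Z x y E1 E2.
  assert (E : f \o (p1 \o x) = g \o (p2 \o x)) by (rewrite !comp_assoc, Hc; reflexivity).
  destruct (Hu Z _ _ E) as [u [_ Hv]].
  rewrite (Hv x eq_refl eq_refl). symmetry. apply Hv; symmetry; assumption.
Qed.

Lemma pullback_paste {P Q A B C' D : C} {p1 : Hom P A} {p2 : Hom P Q}
    {q1 : Hom Q B} {q2 : Hom Q C'} {k : Hom A B} {f : Hom B D} {g : Hom C' D} :
  is_pullback p1 p2 k q1 -> is_pullback q1 q2 f g ->
  is_pullback p1 (q2 \o p2) (f \o k) g.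
Proof.
  intros [Hp Up] [Hq Uq]. split.
  - rewrite <- comp_assoc, Hp, !comp_assoc, Hq. reflexivity.
  - intros Z z1 z2 E. rewrite <- comp_assoc in E.
    destruct (Uq Z _ _ E) as [w [[Ew1 Ew2] Uw]].
    destruct (Up Z z1 w (eq_sym Ew1)) as [u [[Eu1 Eu2] Uu]].
    exists u. split; [split; [exact Eu1| rewrite <- comp_assoc, Eu2; exact Ew2]|].
    intros v V1 V2. apply Uu; [exact V1|]. apply Uw.
    + rewrite comp_assoc, <- Hp, <- comp_assoc, V1. reflexivity.
    + rewrite comp_assoc. exact V2.
Qed.

Lemma pullback_unpaste {P Q A B C' D : C} {p1 : Hom P A} {p2 : Hom P Q}
    {q1 : Hom Q B} {q2 : Hom Q C'} {k : Hom A B} {f : Hom B D} {g : Hom C' D} :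
  is_pullback q1 q2 f g -> k \o p1 = q1 \o p2 ->
  is_pullback p1 (q2 \o p2) (f \o k) g -> is_pullback p1 p2 k q1.
Proof.
  intros Hright Hp [_ Uo]. split; [exact Hp|].
  intros Z z1 z2 E.
  assert (E' : (f \o k) \o z1 = g \o (q2 \o z2)).
  { rewrite <- comp_assoc, E, !comp_assoc, (proj1 Hright). reflexivity. }
  destruct (Uo Z _ _ E') as [u [[Eu1 Eu2] Uu]].
  assert (Eu2' : p2 \o u = z2).
  { apply (pullback_jointly_monic Hright).
    - rewrite comp_assoc, <- Hp, <- comp_assoc, Eu1. exact E.
    - rewrite comp_assoc. exact Eu2. }
  exists u. split; [split; assumption|].
  intros v V1 V2. apply Uu; [exact V1|]. rewrite <- comp_assoc, V2. reflexivity.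
Qed.

Lemma pullback_postcomp_mono {P B C' D E : C} (p1 : Hom P B) (p2 : Hom P C')
    (f : Hom B D) (g : Hom C' D) (k : Hom D E) :
  is_pullback p1 p2 f g -> is_mono C k -> is_pullback p1 p2 (k \o f) (k \o g).
Proof.
  intros [Hc Hu] Hk. split.
  - rewrite <- !comp_assoc, Hc. reflexivity.
  - intros Z z1 z2 E0. apply Hu, Hk. rewrite !comp_assoc. exact E0.
Qed.

Lemma pullback_cancel_mono {P B C' C'' D : C} (p1 : Hom P B) (p2 : Hom P C')
    (f : Hom B D) (g : Hom C'' D) (h : Hom C' C'') :
  is_pullback p1 (h \o p2) f g -> is_mono C h -> is_pullback p1 p2 f (g \o h).
Proof.
  intros [Hc Hu] Hh. split; [rewrite Hc, comp_assoc; reflexivity|].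
  intros Z z1 z2 E. rewrite <- comp_assoc in E.
  destruct (Hu Z _ _ E) as [u [[Eu1 Eu2] Uu]].
  exists u. split.
  - split; [exact Eu1|]. apply Hh. rewrite comp_assoc. exact Eu2.
  - intros v V1 V2. apply Uu; [exact V1|]. rewrite <- comp_assoc, V2. reflexivity.
Qed.

Lemma iso_idm (A : C) : is_iso (idm A).
Proof. exists (idm A). rewrite comp_idl. split; reflexivity. Qed.

End Pullbacks.

Section MAdhesive.
Variables (C : Cat) (M : MClass C).
Hypothesis Hadh : M_adhesive M.

Lemma M_mono {A B : C} {f : Hom A B} : M _ _ f -> is_mono C f.
Proof. apply Hadh. Qed.

Lemma M_of_iso {A B : C} {f : Hom A B} : is_iso f -> M _ _ f.
Proof. apply Hadh. Qed.

Lemma M_comp {A B D : C} {f : Hom A B} {g : Hom B D} :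
  M _ _ f -> M _ _ g -> M _ _ (g \o f).
Proof. apply Hadh. Qed.

Lemma M_decomp {A B D : C} {f : Hom A B} {g : Hom B D} :
  M _ _ (g \o f) -> M _ _ g -> M _ _ f.
Proof. apply Hadh. Qed.

Lemma pullback_M_exists {B C' D : C} (f : Hom B D) {g : Hom C' D} :
  M _ _ g -> exists P (p1 : Hom P B) (p2 : Hom P C'), is_pullback p1 p2 f g.
Proof. apply Hadh. Qed.

Lemma pullback_M_stable {P B C' D : C} (p1 : Hom P B) (p2 : Hom P C')
    (f : Hom B D) (g : Hom C' D) :
  is_pullback p1 p2 f g -> M _ _ g -> M _ _ p1.
Proof. apply Hadh. Qed.

Lemma pushout_M_exists {A B C' : C} {m : Hom A B} (f : Hom A C') :
  M _ _ m -> exists P (i1 : Hom B P) (i2 : Hom C' P), is_pushout m f i1 i2.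
Proof. apply Hadh. Qed.

Lemma pushout_M_stable {A B C' P : C} (m : Hom A B) (f : Hom A C')
    (i1 : Hom B P) (i2 : Hom C' P) :
  is_pushout m f i1 i2 -> M _ _ m -> M _ _ i2.
Proof. apply Hadh. Qed.

Lemma M_van_Kampen {A B C' D A' B' C'' D' : C}
    {m : Hom A B} {f : Hom A C'} {g : Hom B D} {n : Hom C' D}
    {m' : Hom A' B'} {f' : Hom A' C''} {g' : Hom B' D'} {n' : Hom C'' D'}
    {a : Hom A' A} {b : Hom B' B} {c : Hom C'' C'} {d : Hom D' D} :
  is_pushout m f g n -> M _ _ m ->
  g' \o m' = n' \o f' ->
  m \o a = b \o m' -> f \o a = c \o f' ->
  g \o b = d \o g' -> n \o c = d \o n' ->
  is_pullback a m' m b -> is_pullback a f' f c ->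
  M _ _ b -> M _ _ c -> M _ _ d ->
  (is_pushout m' f' g' n' <-> (is_pullback b g' g d /\ is_pullback c n' n d)).
Proof. apply Hadh. Qed.

(* Van Kampen for the cube over the given pushout whose top face is the trivial pushout
   of [f] along [idm A]: the given square is one of its front faces. *)
Lemma M_pushout_is_pullback {A B C' D : C}
    (m : Hom A B) (f : Hom A C') (g : Hom B D) (n : Hom C' D) :
  is_pushout m f g n -> M _ _ m -> is_pullback m f g n.
Proof.
  intros Hpo Hm.
  assert (Hker : is_pullback (idm A) (idm A) m m).
  { split; [reflexivity|]. intros Z z1 z2 E. exists z1.
    split; [split; [apply comp_idl| rewrite comp_idl; exact (M_mono Hm _ _ _ E)]|].
    intros v V1 _. rewrite comp_idl in V1. exact V1. }
  assert (Hf_id : is_pullback (idm A) f f (idm C')).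
  { split; [rewrite comp_idl, comp_idr; reflexivity|].
    intros Z z1 z2 E. exists z1. rewrite comp_idl in E.
    split; [split; [apply comp_idl| exact E]|].
    intros v V1 _. rewrite comp_idl in V1. exact V1. }
  assert (Hf_po : is_pushout (idm A) f f (idm C')).
  { split; [rewrite comp_idl, comp_idr; reflexivity|].
    intros Z z1 z2 E. exists z2. rewrite comp_idr in E.
    split; [split; [symmetry; exact E| apply comp_idr]|].
    intros v _ V2. rewrite comp_idr in V2. exact V2. }
  assert (Ef : f \o idm A = idm C' \o f) by (rewrite comp_idl, comp_idr; reflexivity).
  refine (proj1 (proj1 (M_van_Kampen Hpo Hm Ef eq_refl Ef (proj1 Hpo) eq_refl
    Hker Hf_id Hm _ (pushout_M_stable Hpo Hm)) Hf_po)).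
  apply M_of_iso, iso_idm.
Qed.

Lemma M_pushout_pullback_stable {A B C' D A' B' C'' D' : C}
    {m : Hom A B} {f : Hom A C'} {g : Hom B D} {n : Hom C' D}
    {m' : Hom A' B'} {f' : Hom A' C''} {g' : Hom B' D'} {n' : Hom C'' D'}
    {a : Hom A' A} {b : Hom B' B} {c : Hom C'' C'} {d : Hom D' D} :
  is_pushout m f g n -> M _ _ m -> M _ _ b -> M _ _ c -> M _ _ d ->
  is_pullback a m' m b -> is_pullback a f' f c ->
  is_pullback b g' g d -> is_pullback c n' n d ->
  is_pushout m' f' g' n'.
Proof.
  intros Hpo Hm Hb Hc Hd Hma Hfa Hgb Hnc.
  assert (Htop : g' \o m' = n' \o f').
  { apply (M_mono Hd).
    rewrite !comp_assoc, <- (proj1 Hgb), <- (proj1 Hnc), <- !comp_assoc,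
      <- (proj1 Hma), <- (proj1 Hfa), !comp_assoc, (proj1 Hpo).
    reflexivity. }
  apply (M_van_Kampen Hpo Hm Htop (proj1 Hma) (proj1 Hfa) (proj1 Hgb) (proj1 Hnc)
    Hma Hfa Hb Hc Hd).
  split; assumption.
Qed.

Variable NN : C -> Prop.

Lemma sat_cN_M_sub {A B : C} (j : Hom A B) :
  M _ _ j -> sat_cN M NN B -> sat_cN M NN A.
Proof.
  intros Hj HB N HN [f Hf]. apply (HB N HN). exists (j \o f). apply M_comp; assumption.
Qed.

Lemma effective_union_M (Heff : M_effective_unions M) {A B C' D E : C}
    (b : Hom B D) (c : Hom C' D) (a1 : Hom A B) (a2 : Hom A C')
    (e1 : Hom B E) (e2 : Hom C' E) :
  M _ _ b -> M _ _ c -> is_pullback a1 a2 b c -> is_pushout a1 a2 e1 e2 ->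
  exists u : Hom E D, M _ _ u /\ u \o e1 = b /\ u \o e2 = c.
Proof.
  intros Hb Hc Hpb Hpo.
  destruct (proj2 Hpo D b c (proj1 Hpb)) as [u [[Eu1 Eu2] _]].
  exists u. split; [exact (Heff _ _ _ _ b c a1 a2 Hb Hc Hpb _ e1 e2 Hpo u Eu1 Eu2)|].
  split; assumption.
Qed.

End MAdhesive.

Section SqPO_derivation.
Variables (C : Cat) (M : MClass C) (NN : C -> Prop).
Hypotheses (Hadh : M_adhesive M) (Heff : M_effective_unions M).
Variables (O K I X0 Xb X1 : C) (rO : Hom K O) (rI : Hom K I) (m : Hom I X0)
  (kb : Hom K Xb) (xb : Hom Xb X0) (o1 : Hom O X1) (x1 : Hom Xb X1).
Hypotheses (HrO : M _ _ rO) (HrI : M _ _ rI) (Hm : M _ _ m) (Hxb : M _ _ xb).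
Hypotheses (HF : is_FPC rI m kb xb) (Hpo : is_pushout rO kb o1 x1).

Lemma FPC_leg_M : M _ _ kb.
Proof. exact (pullback_M_stable Hadh (pullback_sym (proj1 HF)) Hm). Qed.

Lemma derivation_pushout_is_pullback : is_pullback rO kb o1 x1.
Proof. exact (M_pushout_is_pullback Hadh Hpo HrO). Qed.

Lemma FPC_restrict_embedding {D C1 P : C} (d1 : Hom D C1) (eD : Hom D K)
    (p1 : Hom C1 P) (pI : Hom I P) (g : Hom P X0) :
  M _ _ d1 -> M _ _ eD -> is_pushout d1 (rI \o eD) p1 pI ->
  M _ _ g -> g \o pI = m ->
  exists h : Hom C1 Xb, M _ _ h /\ xb \o h = g \o p1 /\ h \o d1 = kb \o eD.
Proof.
  intros Hd1 HeD HpoP Hg Hgm.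
  assert (HpbP : is_pullback (rI \o eD) d1 m (g \o p1)).
  { apply pullback_sym. rewrite <- Hgm.
    exact (pullback_postcomp_mono (M_pushout_is_pullback Hadh HpoP Hd1) (M_mono Hadh Hg)). }
  destruct (proj2 HF D C1 (rI \o eD) d1 (g \o p1) eD HpbP eq_refl)
    as [h [[Eh1 Eh2] _]].
  exists h. split; [|split; assumption].
  assert (Hp1 : M _ _ p1)
    by exact (pushout_M_stable Hadh (pushout_sym HpoP) (M_comp Hadh HeD HrI)).
  apply (M_decomp Hadh (g := xb)); [rewrite Eh1; exact (M_comp Hadh Hp1 Hg)|exact Hxb].
Qed.

Lemma sat_cI_of_derived_sat_cN : sat_cN M NN X1 -> sat_cI M NN rO rI m.
Proof.
  intros Hsat1 C1 C2 D d1 d2 HSN e2 eD He2 HeD Hpb P p1 pI HpoP _ [g [Hg Hgm]].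
  destruct HSN as [Hd2 [Hd1 [_ [_ [_ [P' [i1 [i2 [HpoN [N [HN [j Hj]]]]]]]]]]]].
  destruct (FPC_restrict_embedding Hd1 HeD HpoP Hg Hgm) as [h [Hh [_ Eh]]].
  assert (HpbU : is_pullback d2 d1 (o1 \o e2) (x1 \o h)).
  { apply pullback_cancel_mono; [|exact (M_mono Hadh Hh)]. rewrite Eh.
    exact (pullback_paste (pullback_sym Hpb) derivation_pushout_is_pullback). }
  pose proof (pushout_M_stable Hadh (pushout_sym Hpo) FPC_leg_M) as Ho1.
  pose proof (pushout_M_stable Hadh Hpo HrO) as Hx1.
  destruct (effective_union_M Heff (M_comp Hadh He2 Ho1) (M_comp Hadh Hh Hx1) HpbU HpoN)
    as [u [Hu _]].
  destruct Hj as [jinv [Ej1 Ej2]].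
  apply (Hsat1 N HN). exists (u \o jinv).
  apply (M_comp Hadh); [apply (M_of_iso Hadh); exists j; split; assumption|exact Hu].
Qed.

Lemma derived_sat_cN_of_sat_cI :
  sat_cN M NN O -> sat_cN M NN K -> sat_cN M NN X0 ->
  sat_cI M NN rO rI m -> sat_cN M NN X1.
Proof.
  intros satO satK satX0 HcI N HN [f Hf].
  destruct (pullback_M_exists Hadh o1 Hf) as [C2 [e2 [c2 HC2]]].
  destruct (pullback_M_exists Hadh x1 Hf) as [C1 [h [c1 HC1]]].
  pose proof (pullback_M_stable Hadh HC2 Hf) as He2.
  pose proof (pullback_M_stable Hadh HC1 Hf) as Hh.
  destruct (pullback_M_exists Hadh rO He2) as [D [a [m' HD]]].
  pose proof (pullback_M_stable Hadh HD He2) as Ha.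
  pose proof (pullback_M_stable Hadh (pullback_sym HD) HrO) as Hm'.
  pose proof (pullback_paste HD HC2) as HDN.
  rewrite (proj1 Hpo) in HDN.
  destruct (proj2 HC1 D (kb \o a) (c2 \o m')) as [f' [[Ef1 Ef2] _]];
    [rewrite comp_assoc; exact (proj1 HDN)|].
  rewrite <- Ef2 in HDN.
  assert (HpbA : is_pullback a f' kb h) by exact (pullback_unpaste HC1 (eq_sym Ef1) HDN).
  pose proof (pullback_M_stable Hadh (pullback_sym HpbA) FPC_leg_M) as Hf'.
  assert (HpoN : is_pushout m' f' c2 c1)
    by exact (M_pushout_pullback_stable Hadh Hpo HrO He2 Hh Hf HD HpbA HC2 HC1).
  destruct (pushout_M_exists Hadh (rI \o a) Hf') as [P [p1 [pI HpoP]]].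
  assert (HpbG : is_pullback f' (rI \o a) (xb \o h) m)
    by exact (pullback_paste (pullback_sym HpbA) (pullback_sym (proj1 HF))).
  destruct (effective_union_M Heff (M_comp Hadh Hh Hxb) Hm HpbG HpoP)
    as [g [Hg [_ Hgm]]].
  assert (HSN : in_SN M NN m' f').
  { split; [exact Hm'|]. split; [exact Hf'|].
    split; [exact (sat_cN_M_sub Hadh He2 satO)|].
    split; [exact (sat_cN_M_sub Hadh Ha satK)|].
    split; [exact (sat_cN_M_sub Hadh (M_comp Hadh Hh Hxb) satX0)|].
    exists N, c2, c1. split; [exact HpoN|].
    exists N. split; [exact HN|]. exists (idm N). apply iso_idm. }
  apply (HcI C1 C2 D f' m' HSN e2 a He2 Ha HD P p1 pI HpoP).
  - exact (sat_cN_M_sub Hadh Hg satX0).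
  - exists g. split; assumption.
Qed.

End SqPO_derivation.

Theorem corollary1 (C : Cat) (M : MClass C)
  (Hadh : M_adhesive M) (Hfin : finitary M) (Heff : M_effective_unions M)
  (I0 : C) (Hinit : M_initial M I0) (Hfact : epi_M_factorisation M)
  (Hfpc : FPCs_exist M) (Hstab : M_stable_FPC M)
  (NN : C -> Prop)
  (O K I : C) (rO : Hom K O) (rI : Hom K I) :
  M _ _ rO -> M _ _ rI ->
  sat_cN M NN O -> sat_cN M NN K -> sat_cN M NN I ->
  forall (X0 : C) (m : Hom I X0), sat_cN M NN X0 -> M _ _ m ->
  forall (Xb : C) (kb : Hom K Xb) (xb : Hom Xb X0), is_FPC rI m kb xb ->
  forall (X1 : C) (o1 : Hom O X1) (x1 : Hom Xb X1), is_pushout rO kb o1 x1 ->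
  (sat_cN M NN X1 <-> sat_cI M NN rO rI m).
Proof.
  intros HrO HrI satO satK _ X0 m satX0 Hm Xb kb xb HF X1 o1 x1 Hpo.
  pose proof (Hstab _ _ _ _ _ _ _ _ HF HrI Hm) as Hxb.
  split.
  - exact (sat_cI_of_derived_sat_cN Hadh Heff HrO HrI Hm Hxb HF Hpo).
  - exact (derived_sat_cN_of_sat_cI Hadh Heff HrO Hm Hxb HF Hpo satO satK satX0).
Qed.
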